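(* For every DAG $\vec H$ with $k$ vertices, $\mathrm{dtw}(\vec H)\le \frac{k}{5}+4$.
   Context: For a DAG $\vec H$, a source is a vertex of in-degree $0$; $S$ denotes the set of sources; $R(s)$ is the set of vertices reachable from $s$, and $R(B)=\bigcup_{s\in B}R(s)$. A DAG tree decomposition of $\vec H$ is a tree $T$ whose nodes (bags) are subsets of $S$ such that every source lies in some bag and, for any bags $B,B_1,B_2$ with $B$ on the path between $B_1$ and $B_2$ in $T$, $R(B_1)\cap R(B_2)\subseteq R(B)$; its width is the maximum bag size and $\mathrm{dtw}(\vec H)$ is the minimum width. *)

From mathcomp Require Import all_boot all_order all_algebra.
Set Implicit Arguments. Unset Strict Implicit. Unset Printing Implicit Defensive.

Definition is_dag (V : finType) (e : rel V) : Prop :=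
  forall x y, e x y -> ~~ connect e y x.

Definition sources (V : finType) (e : rel V) : {set V} :=
  [set v | [forall u, ~~ e u v]].

Definition reach (V : finType) (e : rel V) (s : V) : {set V} :=
  [set v | connect e s v].

Definition reachB (V : finType) (e : rel V) (B : {set V}) : {set V} :=
  \bigcup_(s in B) reach e s.

Definition is_tree (I : finType) (t : rel I) : Prop :=
  symmetric t /\ irreflexive t /\
  forall x y : I, exists! p : seq I,
      [&& path t x p, last x p == y & uniq (x :: p)].

Definition on_tree_path (I : finType) (t : rel I) (x y z : I) : Prop :=
  forall p : seq I, path t x p -> last x p = y -> uniq (x :: p) -> z \in x :: p.

Definition dag_tree_decomposition (V : finType) (e : rel V)
    (I : finType) (t : rel I) (bag : I -> {set V}) : Prop :=
  [/\ is_tree t,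
      forall i, bag i \subset sources e,
      forall s, s \in sources e -> exists i, s \in bag i &
      forall i i1 i2, on_tree_path t i1 i2 i ->
        reachB e (bag i1) :&: reachB e (bag i2) \subset reachB e (bag i)].

Definition dtd_width (V : finType) (I : finType) (bag : I -> {set V}) : nat :=
  \max_(i : I) #|bag i|.

(* A vertex v lies in R(B) exactly when the bag B meets the set A(v) of sources
   from which v is reachable, so a DAG tree decomposition is a tree decomposition
   of the hypergraph on the sources whose edges are the sets A(v): the nodes whose
   bags meet an edge must span a subtree.  Only edges with at least two vertices
   matter, and they all come from non-sources; hence the number of sources plus
   the number of such edges is at most k.

   By induction on the vertex set W we find a decomposition of width K with
   5K + delta <= |W| + #edges + 20, where delta = 1 if some vertex has degree at
   most 2.  A vertex of degree at most 1 becomes a leaf bag next to its edge, and a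
   disconnected hypergraph is decomposed componentwise.  Otherwise some vertex a
   is made an apex: it is removed together with its edges and then added to every
   bag, which costs 5 and frees 1 + deg a units of potential.  This pays for
   itself when deg a >= 4; when all degrees are 2 or 3, the neighbours of a that
   have become leaves and the slack delta make up the difference. *)

From mathcomp Require Import all_boot all_order all_algebra.
From mathcomp Require Import zify lra.
Import Order.TTheory GRing.Theory Num.Theory.
Set Implicit Arguments. Unset Strict Implicit. Unset Printing Implicit Defensive.

(* Trees are given by parent pointers on the nodes [0, n), with [par i < i] for
   [i > 0].  [rooted par X]: the node set [X] is empty, or all its nodes but one
   are non-root nodes with their parent in [X], so that [X] spans a subtree. *)
Definition rooted (par : nat -> nat) (X : pred nat) : Prop :=
  (forall i, ~~ X i) \/
  exists r, X r /\ forall x, X x -> x != r -> 0 < x /\ X (par x).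

Lemma rooted_ext par par' (X X' : pred nat) :
  X =1 X' -> (forall x, X x -> par' x = par x) -> rooted par X -> rooted par' X'.
Proof.
move=> eX ep [H|[r [Xr H]]]; [left=> i; rewrite -eX // | right; exists r].
split=> [|x]; rewrite -?eX // => Xx xr; have [? ?] := H x Xx xr.
by rewrite ep // -eX.
Qed.

Lemma rooted_add_leaf n j par (X X' : pred nat) :
  j < n -> (forall i, X i -> i < n) ->
  (forall i, i != n -> X' i = X i) -> (X' n -> X j \/ forall i, ~~ X i) ->
  rooted par X -> rooted (fun i => if i == n then j else par i) X'.
Proof.
move=> jn Xn eX Xj [emp|[r [Xr H]]].
  case: (boolP (X' n)) => Xn'; [right; exists n; split=> // x Xx xn|left=> i].
    by move: Xx; rewrite eX // (negbTE (emp x)).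
  by case: (eqVneq i n) => [->//|ni]; rewrite eX.
have rn := Xn r Xr.
right; exists r; split; first by rewrite eX ?(ltn_eqF rn).
move=> x Xx xr; case: (eqVneq x n) => [xn|xn].
  subst x; split; first exact: leq_ltn_trans (leq0n r) rn.
  rewrite eX ?(ltn_eqF jn) //.
  by case: (Xj Xx) => // emp; move: (emp r); rewrite Xr.
rewrite eX // in Xx; have [x0 Xp] := H x Xx xr.
by rewrite eX ?(ltn_eqF (Xn _ Xp)).
Qed.

Lemma rooted_shift m q par (X : pred nat) :
  rooted par X ->
  rooted (fun i => if i < m then q i else if i == m then 0 else m + par (i - m))
         (fun i => (m <= i) && X (i - m)).
Proof.
move=> [emp|[r [Xr H]]]; [left=> i; rewrite (negbTE (emp _)) andbF //|right].
exists (m + r); split=> [|x /andP[mx Xx] xr]; first by rewrite leq_addr addKn.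
have xr' : x - m != r by apply: contra xr => /eqP <-; rewrite subnKC.
have [x0 Xp] := H _ Xx xr'.
rewrite [x < m]ltnNge mx /= (_ : x == m = false); last by apply/eqP=> xm; rewrite xm subnn in x0.
by split; [lia|rewrite leq_addr addKn].
Qed.

Section Decompositions.
Variables (T V : finType) (A : V -> {set T}).

Definition meeting n (bag : nat -> {set T}) (U : {set T}) : pred nat :=
  fun i => (i < n) && (bag i :&: U != set0).

(* A tree decomposition of the hypergraph on [W] whose edges are the [A v], [v \in F]. *)
Definition is_dec (W : {set T}) (F : {set V}) n (par : nat -> nat)
    (bag : nat -> {set T}) : Prop :=
  [/\ 0 < n, forall i, 0 < i < n -> par i < i,
      forall i, i < n -> bag i \subset W,
      forall w, w \in W -> exists2 i, i < n & w \in bag i &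
      forall v, v \in F -> rooted par (meeting n bag (A v))].

Definition has_dec (W : {set T}) (F : {set V}) K := exists n par bag,
  is_dec W F n par bag /\ forall i, i < n -> #|bag i| <= K.

Definition avoiding (F : {set V}) a := [set v in F | a \notin A v].

Definition incident (W : {set T}) (F : {set V}) a :=
  [set v in F | (a \in A v) && (1 < #|A v :&: W|)].

Definition deg (W : {set T}) (F : {set V}) a := #|incident W F a|.

Lemma has_dec_card (W : {set T}) (F : {set V}) : has_dec W F #|W|.
Proof.
exists 1, (fun=> 0), (fun=> W); split=> //; split=> //.
- by case=> [|[]].
- by move=> w wW; exists 0.
- move=> v _; case: (eqVneq (W :&: A v) set0) => h; [left=> i|right; exists 0].
    by rewrite /meeting h eqxx andbF.
  by split=> // [[|x]] //; rewrite /meeting ltnS ltn0.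
Qed.

Lemma has_dec_apex (W : {set T}) (F : {set V}) a K :
  a \in W -> has_dec (W :\ a) (avoiding F a) K -> has_dec W F K.+1.
Proof.
move=> aW [n [par [bag [[n0 hp hb hc hr] hK]]]].
exists n, par, (fun i => a |: bag i); split=> [|i /hK bK]; last first.
  by rewrite (leq_trans (leq_card_setU _ _)) // cards1 add1n ltnS.
split=> //.
- by move=> i /hb sb; rewrite subUset sub1set aW (subset_trans sb) ?subD1set.
- move=> w wW; case: (eqVneq w a) => [->|wa]; first by exists 0; rewrite ?setU11.
  have [|i lin wb] := hc w; first by rewrite in_setD1 wa.
  by exists i; rewrite ?in_setU1 ?wb ?orbT.
move=> v vF; case: (boolP (a \in A v)) => av.
  have meet_a i : (a |: bag i) :&: A v != set0.
    by apply/set0Pn; exists a; rewrite inE setU11.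
  right; exists 0; split=> [|x /andP[xn _] x0]; first by rewrite /meeting n0 meet_a.
  have px : par x < n by rewrite (ltn_trans (hp x _)) // lt0n x0.
  by rewrite lt0n x0 /meeting px meet_a.
apply: rooted_ext (hr v _) => [i|//|]; last by rewrite inE vF.
rewrite /meeting setIUl (_ : [set a] :&: A v = set0) ?set0U //.
by apply/setP=> x; rewrite !inE; case: eqP => // ->; rewrite (negbTE av).
Qed.

Lemma attach_node (W : {set T}) (F : {set V}) a n par bag :
  a \in W -> deg W F a <= 1 -> is_dec (W :\ a) F n par bag ->
  exists2 j, j < n & forall v, v \in incident W F a -> meeting n bag (A v) j.
Proof.
move=> aW /card_le1_eqP d1 [n0 _ _ hc _].
case: (set_0Vmem (incident W F a)) => [->|[v vd]]; first by exists 0 => // v; rewrite inE.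
move: (vd); rewrite inE => /andP[vF /andP[av c2]].
have [b] : exists b, b \in (A v :&: W) :\ a.
  by apply/card_gt0P; move: c2; rewrite (cardsD1 a) inE av aW.
rewrite !inE => /andP[ba /andP[bv bW]].
have [|j jn bj] := hc b; first by rewrite in_setD1 ba.
exists j => // u ud; have -> : u = v by apply: d1.
rewrite /meeting jn; apply/set0Pn.
by exists b; rewrite inE bj.
Qed.

Lemma has_dec_leaf (W : {set T}) (F : {set V}) a K :
  a \in W -> deg W F a <= 1 -> has_dec (W :\ a) F K -> has_dec W F (maxn K 1).
Proof.
move=> aW d1 [n [par [bag [dec hK]]]].
have [j jn hj] := attach_node aW d1 dec; case: dec => n0 hp hb hc hr.
exists n.+1, (fun i => if i == n then j else par i),
  (fun i => if i == n then [set a] else bag i); split; last first.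
  move=> i; case: eqP => [_|/eqP ni] lin; first by rewrite cards1 leq_maxr.
  by rewrite (leq_trans (hK i _)) ?leq_maxl //; lia.
split=> //.
- move=> i; case: eqP => [->//|/eqP ni] i_lt; apply: hp; lia.
- move=> i; case: eqP => [_|/eqP ni] lin; first by rewrite sub1set.
  by rewrite (subset_trans (hb i _)) ?subD1set //; lia.
- move=> w wW; case: (eqVneq w a) => [->|wa]; first by exists n; rewrite ?eqxx ?set11.
  have [|i lin wb] := hc w; first by rewrite in_setD1 wa.
  by exists i; rewrite ?(ltn_eqF lin) // ltnS ltnW.
move=> v vF; apply: (rooted_add_leaf jn) (hr v vF) => [i /andP[]//|i ni|].
  by rewrite /meeting (negbTE ni) ltnS leq_eqVlt (negbTE ni).
rewrite /meeting eqxx ltnSn /= => /set0Pn [x]; rewrite !inE => /andP[/eqP -> av].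
case: (hr v vF) => [|[r [Xr _]]]; [by right|left].
case/andP: Xr => rn /set0Pn [y]; rewrite inE => /andP[/(subsetP (hb r rn))].
rewrite in_setD1 => /andP[ya yW] yv.
apply: hj; rewrite inE vF av /=; apply/card_gt1P; exists a, y.
by rewrite !inE av aW yv yW eq_sym ya.
Qed.

Lemma has_dec_join (W1 W2 : {set T}) (F : {set V}) K1 K2 :
  (forall v, v \in F -> [disjoint A v & W2] || [disjoint A v & W1]) ->
  has_dec W1 F K1 -> has_dec W2 F K2 -> has_dec (W1 :|: W2) F (maxn K1 K2).
Proof.
move=> hF [n1 [p1 [b1 [[n10 hp1 hb1 hc1 hr1] hK1]]]]
  [n2 [p2 [b2 [[n20 hp2 hb2 hc2 hr2] hK2]]]].
pose bag i := if i < n1 then b1 i else b2 (i - n1).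
have off (W B : {set T}) v : B \subset W -> [disjoint A v & W] -> (B :&: A v != set0) = false.
  by move=> BW dW; apply/negbTE; rewrite negbK setI_eq0 disjoint_sym (disjointWr BW).
exists (n1 + n2),
  (fun i => if i < n1 then p1 i else if i == n1 then 0 else n1 + p2 (i - n1)), bag.
split=> [|i lin]; last first.
  rewrite /bag; case: ifP => il; first by rewrite (leq_trans (hK1 i il)) ?leq_maxl.
  by rewrite (leq_trans (hK2 _ _)) ?leq_maxr //; lia.
split.
- by rewrite addn_gt0 n10.
- move=> i /andP[i0 lin]; case: ifP => il; first by rewrite hp1 ?i0.
  case: eqP => [->//|/eqP ni]; have := hp2 (i - n1); lia.
- move=> i lin; rewrite /bag; case: ifP => il.
    by rewrite (subset_trans (hb1 i il)) ?subsetUl.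
  by rewrite (subset_trans (hb2 _ _)) ?subsetUr //; lia.
- move=> w; rewrite inE => /orP[/hc1 [i il wi]|/hc2 [i il wi]].
    by exists i; rewrite /bag ?il ?ltn_addr.
  by exists (n1 + i); rewrite /bag ?ltn_add2l // ltnNge leq_addr addKn.
move=> v vF; case/orP: (hF v vF) => dv.
  apply: rooted_ext (hr1 v vF) => [i|x /andP[->//]].
  rewrite /meeting /bag; case: ifP => il; first by rewrite (ltn_addr _ il).
  case: ltnP => //= lin.
  by rewrite (off W2) ?hb2 //; lia.
apply: rooted_ext (rooted_shift n1 p1 (hr2 v vF)) => // i.
rewrite /meeting /bag; case: ifP => il.
  by rewrite leqNgt il /= (off W1) ?andbF ?hb1.
by rewrite leqNgt il ltn_subLR // leqNgt il.
Qed.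

Definition edges (W : {set T}) (F : {set V}) := [set v in F | 1 < #|A v :&: W|].

Definition potential (W : {set T}) (F : {set V}) := #|W| + #|edges W F|.

Definition delta (W : {set T}) (F : {set V}) : nat := [exists w in W, deg W F w <= 2].

Definition neighbours (W : {set T}) (F : {set V}) a :=
  [set y in W | (y != a) && [exists v in incident W F a, y \in A v]].

Lemma avoiding_sub (F : {set V}) a : avoiding F a \subset F.
Proof. by apply/subsetP=> v; rewrite inE => /andP[]. Qed.

Lemma incidentS (W' W : {set T}) (F' F : {set V}) x :
  W' \subset W -> F' \subset F -> incident W' F' x \subset incident W F x.
Proof.
move=> sW sF; apply/subsetP=> v; rewrite !inE => /andP[vF /andP[xv c]].
by rewrite (subsetP sF) // xv (leq_trans c) // subset_leq_card // setIS.
Qed.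

Lemma degS (W' W : {set T}) (F' F : {set V}) x :
  W' \subset W -> F' \subset F -> deg W' F' x <= deg W F x.
Proof. by move=> sW sF; apply/subset_leq_card/incidentS. Qed.

Lemma deg_lt_incident (W' W : {set T}) (F' F : {set V}) x v :
  W' \subset W -> F' \subset F -> v \in incident W F x -> v \notin incident W' F' x ->
  deg W' F' x < deg W F x.
Proof. by move=> sW sF vx vx'; apply/proper_card/properP; split; [exact: incidentS|exists v]. Qed.

Lemma deg_avoiding_lt (W' W : {set T}) (F : {set V}) a y v :
  W' \subset W -> v \in incident W F y -> a \in A v ->
  deg W' (avoiding F a) y < deg W F y.
Proof.
move=> sW vy av; apply: deg_lt_incident vy _ => //; first exact: avoiding_sub.
by rewrite !inE av andbF.
Qed.

Lemma edgesS (W' W : {set T}) (F' F : {set V}) :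
  W' \subset W -> F' \subset F -> edges W' F' \subset edges W F.
Proof.
move=> sW sF; apply/subsetP=> v; rewrite !inE => /andP[vF c].
by rewrite (subsetP sF) // (leq_trans c) // subset_leq_card // setIS.
Qed.

Lemma potential_D1 (W : {set T}) (F F' : {set V}) a :
  a \in W -> F' \subset F -> potential (W :\ a) F' < potential W F.
Proof.
move=> aW sF; rewrite /potential (cardsD1 a W) aW.
by rewrite add1n addSn ltnS leq_add2l subset_leq_card // edgesS ?subD1set.
Qed.

Lemma potential_apex (W : {set T}) (F : {set V}) a : a \in W ->
  potential (W :\ a) (avoiding F a) + deg W F a < potential W F.
Proof.
move=> aW; rewrite /potential (cardsD1 a W) aW /deg add1n addSn ltnS -addnA leq_add2l.
rewrite -cardsUI (_ : _ :&: _ = set0) ?cards0 ?addn0; last first.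
  by apply/setP=> v; rewrite !inE; case: (a \in A v); rewrite ?andbF.
apply/subset_leq_card/subsetP=> v; rewrite !inE.
case/orP=> [/andP[/andP[-> _] c]|/andP[-> /andP[_ ->]]] //.
by rewrite (leq_trans c) // subset_leq_card // setIS // subD1set.
Qed.

Lemma delta_le1 (W : {set T}) (F : {set V}) : delta W F <= 1.
Proof. by rewrite /delta; case: existsP. Qed.

Lemma delta_eq1 (W : {set T}) (F : {set V}) x :
  x \in W -> deg W F x <= 2 -> delta W F = 1.
Proof. by move=> xW dx; rewrite /delta (introT exists_inP) //; exists x. Qed.

Lemma mem_neighbours (W : {set T}) (F : {set V}) a y v :
  v \in F -> a \in A v -> y \in A v -> a \in W -> y \in W -> y != a ->
  y \in neighbours W F a.
Proof.
move=> vF av yv aW yW ya; rewrite inE yW ya; apply/exists_inP; exists v => //.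
by rewrite inE vF av; apply/card_gt1P; exists a, y; rewrite !inE av aW yv yW eq_sym.
Qed.

Lemma incident_neighbour (W : {set T}) (F : {set V}) a v :
  a \in W -> v \in incident W F a -> exists2 y, y \in neighbours W F a & y \in A v.
Proof.
move=> aW; rewrite inE => /andP[vF /andP[av c]].
have [y] : exists y, y \in (A v :&: W) :\ a.
  by apply/card_gt0P; move: c; rewrite (cardsD1 a) inE av aW.
rewrite !inE => /andP[ya /andP[yv yW]].
by exists y => //; apply: (mem_neighbours vF).
Qed.

Lemma neighboursP (W : {set T}) (F : {set V}) a y : y \in neighbours W F a ->
  [/\ y \in W, y != a & exists2 v, v \in incident W F a & y \in A v].
Proof. by rewrite inE => /and3P[yW ya /exists_inP]. Qed.

Lemma neighbours_sym (W : {set T}) (F : {set V}) a y :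
  a \in W -> y \in neighbours W F a -> a \in neighbours W F y.
Proof.
move=> aW /neighboursP [yW ya [v]]; rewrite inE => /andP[vF /andP[av _]] yv.
by apply: (mem_neighbours vF); rewrite // eq_sym.
Qed.

Lemma deg_avoiding_neighbour (W' W : {set T}) (F : {set V}) a y :
  y \in neighbours W F a -> W' \subset W ->
  deg W' (avoiding F a) y < deg W F y.
Proof.
move=> /neighboursP [_ _ [v]]; rewrite inE => /andP[vF /andP[av c]] yv sW.
by apply: (deg_avoiding_lt (v := v)); rewrite // inE vF yv c.
Qed.

Definition separates (W : {set T}) (F : {set V}) (Z : {set T}) :=
  [&& Z \subset W, Z != set0, Z != W &
      [forall v in F, [disjoint A v & W :\: Z] || [disjoint A v & Z]]].

Definition connected (W : {set T}) (F : {set V}) : Prop :=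
  forall Z : {set T}, Z \subset W -> Z != set0 -> Z != W ->
  exists v x z, [/\ v \in F, x \in A v, z \in A v, x \in W :\: Z & z \in Z].

Lemma separates_or_connected (W : {set T}) (F : {set V}) :
  (exists Z, separates W F Z) \/ connected W F.
Proof.
case: (boolP [exists Z, separates W F Z]) => [/existsP|/existsPn nsep]; first by left.
right=> Z ZW Z0 ZW'; have := nsep Z; rewrite /separates ZW Z0 ZW' /=.
case/forall_inPn=> v vF; rewrite negb_or -!setI_eq0 setIC [A v :&: Z]setIC.
by case/andP=> /set0Pn [x] /setIP [xWZ xv] /set0Pn [z] /setIP [zZ zv]; exists v, x, z.
Qed.

Lemma connected_boundary (W : {set T}) (F : {set V}) (P : pred T) z0 x0 :
  connected W F -> z0 \in W -> P z0 -> x0 \in W -> ~~ P x0 ->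
  exists v z x, [/\ v \in F, z \in A v :&: W, x \in A v :&: W, P z & ~~ P x].
Proof.
move=> conn z0W Pz0 x0W Px0.
have /conn [] : [set w in W | P w] \subset W by apply/subsetP=> w; rewrite inE => /andP[].
- by apply/set0Pn; exists z0; rewrite inE z0W.
- by apply/eqP=> /setP /(_ x0); rewrite inE x0W (negbTE Px0).
move=> v [x [z [vF xv zv]]]; rewrite !inE => /andP[Px xW] /andP[zW Pz].
by exists v, z, x; rewrite !inE xv zv xW zW; rewrite xW in Px.
Qed.

Lemma card_edges_split (W1 W2 : {set T}) (F : {set V}) :
  (forall v, v \in F -> [disjoint A v & W2] || [disjoint A v & W1]) ->
  #|edges W1 F| + #|edges W2 F| <= #|edges (W1 :|: W2) F|.
Proof.
move=> hF; rewrite -cardsUI (_ : _ :&: _ = set0) ?cards0 ?addn0; last first.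
  apply/setP=> v; rewrite !inE; apply/negbTE/negP=> /andP[/andP[vF c1] /andP[_ c2]].
  by case/orP: (hF v vF) => /disjoint_setI0 d; [move: c2|move: c1]; rewrite d cards0.
by apply/subset_leq_card; rewrite subUset !edgesS ?subsetUl ?subsetUr.
Qed.

Lemma delta_apex (W : {set T}) (F : {set V}) a :
  2 < deg W F a -> delta W F <= delta (W :\ a) (avoiding F a).
Proof.
move=> da; rewrite {1}/delta; case: exists_inP => // [[x xW dx]].
have xa : x != a by apply: contraTneq dx => ->; rewrite -ltnNge.
rewrite (@delta_eq1 _ _ x) ?in_setD1 ?xa //.
by rewrite (leq_trans _ dx) // degS ?subD1set ?avoiding_sub.
Qed.

(* The induction invariant; the slack [delta] is needed when no degree exceeds 3. *)
Definition dec_bound (W : {set T}) (F : {set V}) :=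
  exists K, has_dec W F K /\ 5 * K + delta W F <= potential W F + 20.

Lemma dec_bound_small (W : {set T}) (F : {set V}) : #|W| <= 4 -> dec_bound W F.
Proof.
move=> W4; exists #|W|; split; first exact: has_dec_card.
by have := delta_le1 W F; rewrite /potential; lia.
Qed.

Lemma no_three_neighbours (W : {set T}) (F : {set V}) w y1 y2 y3 :
  #|neighbours W F w| <= 2 ->
  y1 \in neighbours W F w -> y2 \in neighbours W F w -> y3 \in neighbours W F w ->
  y1 != y2 -> y2 != y3 -> y3 != y1 -> False.
Proof.
move=> n2 y1N y2N y3N *; move: n2; rewrite leqNgt => /negP; apply; apply/card_gt2P.
by exists y1, y2, y3.
Qed.

Lemma neighbours_gt1 (W : {set T}) (F : {set V}) a :
  connected W F -> (forall w, w \in W -> deg W F w = 2) -> 2 < #|W| -> a \in W ->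
  1 < #|neighbours W F a|.
Proof.
move=> conn d2 W2 aW; rewrite ltnNge; apply/negP => /card_le1_eqP N1.
have [v va] : exists v, v \in incident W F a by apply/card_gt0P; rewrite -/(deg W F a) d2.
have [b bN _] := incident_neighbour aW va; have [bW ba _] := neighboursP bN.
have onlyb y : y \in neighbours W F a -> y = b by move=> yN; apply: N1.
have [x0 x0W x0ab] : exists2 x0, x0 \in W & x0 \notin [set a; b].
  by apply/subsetPn/negP => /subset_leq_card; rewrite cards2; case: (a != b); lia.
have [|u [z [x [uF /setIP [zu zW] /setIP [xu xW] zab]]]] :=
  connected_boundary (P := fun w => w \in [set a; b]) conn aW _ x0W x0ab.
  by rewrite !inE eqxx.
rewrite !inE negb_or => /andP[xa xb].
have au : a \notin A u.
  by apply/negP=> au; move: xb; rewrite (onlyb x (mem_neighbours uF au xu aW xW xa)) eqxx.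
have bu : b \in A u.
  by move: zab; rewrite !inE => /orP[]/eqP ez; [move: au; rewrite -ez zu|rewrite -ez].
have /proper_card : incident W F a \proper incident W F b.
  apply/properP; split.
    apply/subsetP=> w wa; have [y yN yw] := incident_neighbour aW wa.
    by move: wa; rewrite !inE -(onlyb y yN) yw => /andP[-> /andP[_ ->]].
  exists u; last by rewrite inE (negbTE au) andbF.
  by rewrite inE uF bu; apply/card_gt1P; exists b, x; rewrite !inE bu bW xu xW eq_sym xb.
by rewrite -/(deg W F a) -/(deg W F b) !d2 ?ltnn.
Qed.

Lemma cycle_crossing_edge (W : {set T}) (F : {set V}) a b c :
  connected W F -> (forall w, w \in W -> #|neighbours W F w| <= 2) -> 3 < #|W| ->
  a \in W -> b \in neighbours W F a -> c \in neighbours W F a -> b != c ->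
  exists v z x, [/\ v \in F, z \in A v :&: W, x \in A v :&: W, a \notin A v &
                    [/\ (z == b) || (z == c), x != a, x != b & x != c]].
Proof.
move=> conn n2 W3 aW bN cN bc.
have [x0 x0W x0Z] : exists2 x0, x0 \in W & x0 \notin [set a; b; c].
  have Z3 : #|[set a; b; c]| <= 3.
    by rewrite (leq_trans (leq_card_setU _ _)) // cardsU1 !cards1; case: (_ \notin _).
  by apply/subsetPn/negP => /subset_leq_card; lia.
have [|v [z [x [vF zvW xvW zZ]]]] :=
  connected_boundary (P := fun w => w \in [set a; b; c]) conn aW _ x0W x0Z.
  by rewrite !inE eqxx.
rewrite !inE !negb_or => /andP[/andP[xa xb] xc].
have [/setIP [zv _] /setIP [xv xW]] := (zvW, xvW).
have av : a \notin A v.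
  apply/negP=> av.
  by apply: (no_three_neighbours (n2 a aW) bN cN (mem_neighbours vF av xv aW xW xa));
    rewrite // eq_sym.
exists v, z, x; split=> //; split=> //.
move: zZ; rewrite !inE -orbA => /or3P[/eqP ez|->|->]; rewrite ?orbT //.
by move: av; rewrite -ez zv.
Qed.

(* The crossing edge [v] keeps at most one vertex besides [a], [b], [c], since its
   vertex [z] among [b], [c] has no neighbours other than [a] and [x]; so [v] no
   longer counts for the degree of [x]. *)
Lemma delta_cycle (W : {set T}) (F : {set V}) a b c :
  connected W F -> (forall w, w \in W -> deg W F w = 2) ->
  (forall w, w \in W -> #|neighbours W F w| <= 2) -> 3 < #|W| -> a \in W ->
  b \in neighbours W F a -> c \in neighbours W F a -> b != c ->
  delta (W :\ a :\ b :\ c) (avoiding F a) = 1.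
Proof.
move=> conn d2 n2 W3 aW bN cN bc.
have [v [z [x [vF /setIP [zv zW] /setIP [xv xW] av [zbc xa xb xc]]]]] :=
  cycle_crossing_edge conn n2 W3 aW bN cN bc.
have zN : z \in neighbours W F a by case/orP: zbc => /eqP->.
have zout : z \notin W :\ a :\ b :\ c by case/orP: zbc => /eqP->; rewrite !inE eqxx ?andbF.
have xz : x != z by case/orP: zbc => /eqP->.
have xNz := mem_neighbours vF zv xv zW xW xz.
have aNz := neighbours_sym aW zN.
have c1 : #|A v :&: (W :\ a :\ b :\ c)| <= 1.
  rewrite leqNgt; apply/negP => /card_gt1P [y1 [y2 [y1in y2in y12]]].
  have [y /setIP [yv yW'] yx] : exists2 y, y \in A v :&: (W :\ a :\ b :\ c) & y != x.
    by case: (eqVneq y1 x) => [e|]; [exists y2; rewrite // -e eq_sym|exists y1].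
  have yz : y != z by apply: contraNneq zout => <-.
  move: (yW'); rewrite !in_setD1 => /and4P[_ _ ya yW].
  by apply: (no_three_neighbours (n2 z zW) aNz xNz (mem_neighbours vF zv yv zW yW yz));
    rewrite // eq_sym.
have s3 : W :\ a :\ b :\ c \subset W.
  by do 2!apply: subset_trans (subD1set _ _) _; apply: subD1set.
have vx : v \in incident W F x.
  by rewrite inE vF xv; apply/card_gt1P; exists z, x; rewrite !inE zv zW xv xW eq_sym xz.
have vx' : v \notin incident (W :\ a :\ b :\ c) (avoiding F a) x.
  by rewrite !inE; apply/negP=> /andP[_ /andP[_ h]]; move: c1; rewrite leqNgt h.
apply: (delta_eq1 (x := x)); first by rewrite !in_setD1 xc xb xa xW.
by have := deg_lt_incident s3 (avoiding_sub F a) vx vx'; rewrite d2 // => /ltnW.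
Qed.

Section InductionStep.
Variables (W : {set T}) (F : {set V}).
Hypothesis IH : forall W' : {set T}, W' \proper W -> forall F', dec_bound W' F'.

Lemma dec_bound_leaf a : a \in W -> deg W F a <= 1 -> dec_bound W F.
Proof.
move=> aW da; have [K [dK bK]] := IH (properD1 aW) F.
exists (maxn K 1); split; first exact: has_dec_leaf dK.
have := potential_D1 aW (subxx F); have := delta_le1 W F; move: bK; clear; lia.
Qed.

Lemma dec_bound_split Z : separates W F Z -> dec_bound W F.
Proof.
case/and4P=> ZW /set0Pn [z zZ] ZW' /forall_inP hZ.
have pZ : Z \proper W by rewrite properEneq ZW' ZW.
have [_ [w wW wZ]] := properP pZ.
have pWZ : W :\: Z \proper W.
  rewrite properEneq subsetDl andbT; apply/eqP=> /setP /(_ z).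
  by rewrite !inE zZ (subsetP ZW).
have [K1 [d1 b1]] := IH pZ F; have [K2 [d2 b2]] := IH pWZ F.
have eW : Z :|: (W :\: Z) = W by rewrite -{2}(setID W Z) (setIidPr ZW).
exists (maxn K1 K2); split; first by rewrite -eW; apply: has_dec_join d1 d2.
have := card_edges_split hZ; rewrite eW => cE.
have cW : #|Z| + #|W :\: Z| = #|W| by rewrite -(cardsID Z W) (setIidPr ZW).
have /card_gt0P-z0 : exists z, z \in Z by exists z.
have /card_gt0P-w0 : exists w, w \in W :\: Z by exists w; rewrite inE wZ.
have := delta_le1 W F; move: b1 b2 cE cW z0 w0; rewrite /potential; clear; lia.
Qed.

Lemma dec_bound_high a : a \in W -> 3 < deg W F a -> dec_bound W F.
Proof.
move=> aW da; have [K [dK bK]] := IH (properD1 aW) (avoiding F a).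
exists K.+1; split; first exact: has_dec_apex dK.
have := potential_apex F aW; have := delta_apex (ltnW da); move: bK da; clear; lia.
Qed.

Lemma dec_bound_cubic a : a \in W -> (forall w, w \in W -> deg W F w = 3) ->
  dec_bound W F.
Proof.
move=> aW d3; have d0 : delta W F = 0 by rewrite /delta; case: exists_inP => // [[w /d3 ->]].
have [v va] : exists v, v \in incident W F a by apply/card_gt0P; rewrite -/(deg W F a) d3.
have [y yN _] := incident_neighbour aW va; have [yW ya _] := neighboursP yN.
have d' : delta (W :\ a) (avoiding F a) = 1.
  apply: (delta_eq1 (x := y)); first by rewrite in_setD1 ya yW.
  by have := deg_avoiding_neighbour yN (subD1set W a); rewrite d3.
have [K [dK bK]] := IH (properD1 aW) (avoiding F a).
exists K.+1; split; first exact: has_dec_apex dK.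
have := potential_apex F aW; move: bK; rewrite d3 // d0 d'; clear; lia.
Qed.

(* Apex [z], then [x] has become a leaf; an edge at [z] missing [x] loses a
   vertex, so the remainder still has a vertex of degree at most two. *)
Lemma dec_bound_mixed v z x :
  v \in F -> z \in A v :&: W -> x \in A v :&: W -> deg W F z = 3 -> deg W F x = 2 ->
  (forall w, w \in W -> deg W F w <= 3) -> dec_bound W F.
Proof.
move=> vF /setIP [zv zW] /setIP [xv xW] dz dx d3.
have xz : x != z by apply: contra_eqN dz => /eqP <-; rewrite dx.
have vx : v \in incident W F x.
  by rewrite inE vF xv; apply/card_gt1P; exists x, z; rewrite !inE xv xW zv zW.
have /subsetPn [u uz ux] : ~~ (incident W F z \subset incident W F x).
  by apply/negP=> /subset_leq_card; rewrite -/(deg W F z) -/(deg W F x) dz dx.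
have [y yN yu] := incident_neighbour zW uz; have [yW yz _] := neighboursP yN.
have yx : y != x.
  by apply: contraNneq ux => <-; move: uz; rewrite !inE yu => /andP[-> /andP[_ ->]].
have xW1 : x \in W :\ z by rewrite in_setD1 xz xW.
have sW2 : W :\ z :\ x \subset W := subset_trans (subD1set _ _) (subD1set _ _).
have d' : delta (W :\ z :\ x) (avoiding F z) = 1.
  apply: (delta_eq1 (x := y)); first by rewrite !in_setD1 yx yz yW.
  exact: leq_trans (deg_avoiding_neighbour yN sW2) (d3 y yW).
have [K [dK bK]] := IH (sub_proper_trans (subD1set _ x) (properD1 zW)) (avoiding F z).
exists (maxn K 1).+1; split.
  apply: has_dec_apex zW (has_dec_leaf xW1 _ dK).
  by have := deg_avoiding_lt (subD1set W z) vx zv; rewrite dx.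
have := potential_D1 xW1 (subxx (avoiding F z)); have := potential_apex F zW.
have := delta_le1 W F; move: bK; rewrite dz d'; clear; lia.
Qed.

Lemma dec_bound_branch a : a \in W -> (forall w, w \in W -> deg W F w = 2) ->
  2 < #|neighbours W F a| -> dec_bound W F.
Proof.
move=> aW d2 /card_gt2P [b [c [d [[bN cN dN] [bc cd db]]]]].
have [bW ba _] := neighboursP bN; have [cW ca _] := neighboursP cN.
have [dW da _] := neighboursP dN.
have bW1 : b \in W :\ a by rewrite in_setD1 ba bW.
have cW2 : c \in W :\ a :\ b by rewrite !in_setD1 eq_sym bc ca cW.
have dW3 : d \in W :\ a :\ b :\ c by rewrite !in_setD1 eq_sym cd db da dW.
have s1 : W :\ a \subset W := subD1set _ _.
have s2 : W :\ a :\ b \subset W := subset_trans (subD1set _ _) s1.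
have s3 : W :\ a :\ b :\ c \subset W := subset_trans (subD1set _ _) s2.
have leaf y (W' : {set T}) :
    y \in neighbours W F a -> W' \subset W -> deg W' (avoiding F a) y <= 1.
  move=> yN sW; have [yW _ _] := neighboursP yN.
  by have := deg_avoiding_neighbour yN sW; rewrite d2.
have pW4 : W :\ a :\ b :\ c :\ d \proper W.
  by apply: sub_proper_trans (properD1 aW); do 3!apply: subset_trans (subD1set _ _) _.
have [K [dK bK]] := IH pW4 (avoiding F a).
exists (maxn (maxn (maxn K 1) 1) 1).+1; split.
  apply: has_dec_apex aW (has_dec_leaf bW1 (leaf b _ bN s1) _).
  exact: has_dec_leaf cW2 (leaf c _ cN s2) (has_dec_leaf dW3 (leaf d _ dN s3) dK).
have := potential_D1 dW3 (subxx (avoiding F a)); have := potential_D1 cW2 (subxx (avoiding F a)).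
have := potential_D1 bW1 (subxx (avoiding F a)); have := potential_apex F aW.
have := delta_le1 W F; move: bK; rewrite d2 //; clear; lia.
Qed.

Lemma dec_bound_cycle a : connected W F -> (forall w, w \in W -> deg W F w = 2) ->
  (forall w, w \in W -> #|neighbours W F w| <= 2) -> 4 < #|W| -> a \in W ->
  dec_bound W F.
Proof.
move=> conn d2 n2 W4 aW.
have /card_gt1P [b [c [bN cN bc]]] := neighbours_gt1 conn d2 (ltnW (ltnW W4)) aW.
have [bW ba _] := neighboursP bN; have [cW ca _] := neighboursP cN.
have bW1 : b \in W :\ a by rewrite in_setD1 ba bW.
have cW2 : c \in W :\ a :\ b by rewrite !in_setD1 eq_sym bc ca cW.
have pW3 : W :\ a :\ b :\ c \proper W.
  by apply: sub_proper_trans (properD1 aW); do 2!apply: subset_trans (subD1set _ _) _.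
have [K [dK bK]] := IH pW3 (avoiding F a).
exists (maxn (maxn K 1) 1).+1; split.
  apply: has_dec_apex aW (has_dec_leaf bW1 _ (has_dec_leaf cW2 _ dK)).
    by have := deg_avoiding_neighbour bN (subD1set W a); rewrite d2.
  by have := deg_avoiding_neighbour cN (subset_trans (subD1set _ b) (subD1set W a)); rewrite d2.
have := potential_D1 cW2 (subxx (avoiding F a)); have := potential_D1 bW1 (subxx (avoiding F a)).
have := potential_apex F aW; have := delta_le1 W F.
by move: bK; rewrite d2 // (delta_cycle conn d2 n2 (ltnW W4) aW bN cN bc); clear; lia.
Qed.

End InductionStep.

Lemma dec_bound_all (W : {set T}) (F : {set V}) : dec_bound W F.
Proof.
move: {2}#|W| (leqnn #|W|) => N; elim: N W F => [|N IHN] W F leWN.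
  by apply: dec_bound_small; rewrite (leq_trans leWN).
have IH (W' : {set T}) : W' \proper W -> forall F', dec_bound W' F'.
  by move=> /proper_card ltW F'; apply: IHN; rewrite -ltnS (leq_trans ltW).
have [W4|W5] := leqP #|W| 4; first exact: dec_bound_small.
have [/exists_inP [a aW da]|/exists_inPn low] := boolP [exists a in W, deg W F a <= 1].
  exact: (dec_bound_leaf IH aW da).
have [[Z sZ]|conn] := separates_or_connected W F; first exact: (dec_bound_split IH sZ).
have [/exists_inP [a aW da]|/exists_inPn high] := boolP [exists a in W, 3 < deg W F a].
  exact: (dec_bound_high IH aW da).
have d23 w : w \in W -> (deg W F w == 2) || (deg W F w == 3).
  by move=> wW; move: (low w wW) (high w wW); clear; lia.
have [a aW] : exists a, a \in W by apply/card_gt0P; rewrite (leq_trans _ W5).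
have [/exists_inP [z zW dz]|/exists_inPn no3] := boolP [exists z in W, deg W F z == 3].
  have [/exists_inP [x xW dx]|/exists_inPn all3] := boolP [exists x in W, deg W F x != 3].
    have [v [s [t [vF sv tv /eqP ds dt]]]] :=
      connected_boundary (P := fun w => deg W F w == 3) conn zW dz xW dx.
    apply: (dec_bound_mixed IH vF sv tv ds) => [|w /high]; last by rewrite -leqNgt.
    by case/setIP: tv => _ /d23; rewrite (negbTE dt) orbF => /eqP.
  by apply: (dec_bound_cubic IH aW) => w /all3 /negPn /eqP.
have d2 w : w \in W -> deg W F w = 2.
  by move=> wW; have := d23 w wW; rewrite (negbTE (no3 w wW)) orbF => /eqP.
have [/exists_inP [b bW nb]|/exists_inPn n2] := boolP [exists b in W, 2 < #|neighbours W F b|].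
  exact: (dec_bound_branch IH bW d2 nb).
by apply: (dec_bound_cycle IH conn d2 _ W5 aW) => w /n2; rewrite -leqNgt.
Qed.

End Decompositions.

Section ParentTree.
Variables (n : nat) (par : nat -> nat).
Hypothesis par_lt : forall i, 0 < i < n -> par i < i.

Definition parent_rel : rel 'I_n :=
  fun i j => ((0 < i) && (par i == j)) || ((0 < j) && (par j == i)).

Lemma parent_rel_sym : symmetric parent_rel.
Proof. by move=> i j; rewrite /parent_rel orbC. Qed.

Lemma parent_rel_irr : irreflexive parent_rel.
Proof.
move=> i; rewrite /parent_rel orbb; apply/negP=> /andP[i0 /eqP pi].
by have := par_lt (i := i); rewrite i0 ltn_ord pi ltnn => /(_ isT).
Qed.

Lemma rooted_connect (X : pred nat) (r : 'I_n) :
  (forall x, X x -> x != r -> 0 < x /\ X (par x)) ->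
  forall x : 'I_n, X x -> connect [rel i j | [&& parent_rel i j, X i & X j]] x r.
Proof.
move=> H x; have [m] := ubnP x; elim: m x => // m IHm x le_xm Xx.
case: (eqVneq (val x) r) => [/val_inj->|xr]; first exact: connect0.
have [x0 Xp] := H x Xx xr.
have px : par x < x by rewrite par_lt // x0 ltn_ord.
apply: (connect_trans (y := Ordinal (ltn_trans px (ltn_ord x)))).
  by apply: connect1; rewrite /= /parent_rel /= x0 eqxx Xx Xp.
by apply: IHm; rewrite //= (leq_trans px).
Qed.

Lemma rooted_path (X : pred nat) (r : 'I_n) :
  X r -> (forall x, X x -> x != r -> 0 < x /\ X (par x)) ->
  forall x y : 'I_n, X x -> X y ->
  exists p, [/\ path parent_rel x p, last x p = y, uniq (x :: p)
              & forall z, z \in x :: p -> X z].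
Proof.
move=> Xr H x y Xx Xy; set eX := [rel i j | [&& parent_rel i j, X i & X j]].
have eX_sym : symmetric eX by move=> i j; rewrite /= parent_rel_sym [X i && _]andbC.
have /connectP [p0 hp0 ->] : connect eX x y.
  apply: connect_trans (rooted_connect H Xx) _.
  by rewrite (sym_connect_sym eX_sym) rooted_connect.
case: (shortenP hp0) => p hp up _; exists p; split=> //.
  by apply: sub_path hp => i j /and3P[].
elim: p x Xx hp {up hp0} => [x Xx _ z|u p IHp x Xx /= /andP[/and3P[_ _ Xu] hp] z].
  by rewrite inE => /eqP->.
by rewrite inE => /predU1P[->//|]; apply: IHp.
Qed.

Definition step_up i := if i == 0 then 0 else par i.

Definition tree_ancestor z w := exists k, iter k step_up w = z.

Lemma tree_ancestor_le z w : w < n -> tree_ancestor z w -> z <= w.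
Proof.
move=> wn [k <-]; elim: k => [//|k IHk]; rewrite iterS {1}/step_up.
case: eqP => [//|/eqP u0].
by rewrite (leq_trans _ IHk) // ltnW // par_lt // lt0n u0 (leq_ltn_trans IHk).
Qed.

Lemma path_in_subtree (z y0 w : 'I_n) p : nat_of_ord y0 = par z ->
  tree_ancestor z w -> path parent_rel w p -> y0 \notin w :: p ->
  forall u, u \in w :: p -> tree_ancestor z u.
Proof.
move=> y0z; elim: p w => [|u p IHp] w zw; first by move=> _ _ v; rewrite inE => /eqP->.
rewrite /= => /andP[wu pu]; rewrite in_cons negb_or => /andP[y0w y0up].
have zu : tree_ancestor z u.
  case/orP: wu => /andP[/lt0n_neq0/negbTE w0 /eqP wu].
    case: zw => [[|k] kw]; last by exists k; rewrite -kw iterSr /step_up w0 wu.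
    have y0u : y0 = u by apply: val_inj; rewrite /= y0z -wu -kw.
    by move: y0up; rewrite y0u mem_head.
  by case: zw => k kw; exists k.+1; rewrite iterSr /step_up w0 wu.
by move=> v; rewrite inE => /predU1P[->//|]; apply: IHp.
Qed.

Definition simple_path (x y : 'I_n) p :=
  [&& path parent_rel x p, last x p == y & uniq (x :: p)].

Lemma simple_path_nil x p : simple_path x x p -> p = [::].
Proof.
case: p => [//|u p] /and3P[_ /eqP lx]; rewrite /= => /andP[].
by rewrite -{1}lx /= mem_last.
Qed.

(* Going down from [x] one could never come back to [y < x]. *)
Lemma simple_path_up (x y : 'I_n) p : y < x -> simple_path x y p ->
  exists x' p', [/\ nat_of_ord x' = par x, p = x' :: p' & simple_path x' y p'].
Proof.
case: p => [|u p] yx /and3P[/= hp /eqP ly]; first by rewrite -ly ltnn in yx.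
case/andP: hp => /orP[] /andP[u0 /eqP pu] pup /andP[xp up_uniq].
  by exists u, p; rewrite /simple_path pup ly eqxx.
have pu_lt : par u < u by rewrite par_lt // u0 ltn_ord.
have zy := path_in_subtree (esym pu) (ex_intro _ 0 erefl) pup xp (mem_last u p).
by have := tree_ancestor_le (ltn_ord _) zy; rewrite ly; move: yx pu_lt; rewrite pu; lia.
Qed.

Lemma simple_path_rev x y p : simple_path x y p -> simple_path y x (rev (belast x p)).
Proof.
case/and3P=> hp /eqP ly ux.
have E : y :: rev (belast x p) = rev (x :: p) by rewrite [x :: p]lastI rev_rcons ly.
apply/and3P; split; last by rewrite E rev_uniq.
  have flip : (fun a b => parent_rel b a) =2 parent_rel by move=> a b; apply: parent_rel_sym.
  by rewrite -ly rev_path (eq_path flip).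
by rewrite -[last _ _]/(last y (y :: rev (belast x p))) E rev_cons last_rcons.
Qed.

Lemma simple_path_unique (x y : 'I_n) p q :
  simple_path x y p -> simple_path x y q -> p = q.
Proof.
have [m] := ubnP (x + y); elim: m x y p q => // m IHm x y p q xym.
have down (x' y' : 'I_n) p' q' : y' < x' -> x' + y' < m.+1 ->
    simple_path x' y' p' -> simple_path x' y' q' -> p' = q'.
  move=> yx xy sp sq.
  have [x1 [p1 [x1x -> sp1]]] := simple_path_up yx sp.
  have [x2 [q1 [x2x -> sq1]]] := simple_path_up yx sq.
  have ex : x2 = x1 by apply: val_inj; rewrite /= x1x x2x.
  rewrite ex in sq1 *; congr (_ :: _); apply: (IHm _ _ _ _ _ sp1 sq1).
  have : par x' < x' by rewrite par_lt // ltn_ord (leq_ltn_trans _ yx).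
  by rewrite -x1x; lia.
case: (ltngtP x y) => [xy|yx|/val_inj exy] sp sq.
- have := down _ _ _ _ xy _ (simple_path_rev sp) (simple_path_rev sq).
  rewrite addnC => /(_ xym)/(congr1 rev); rewrite !revK => eb.
  case/and3P: sp => _ /eqP lp _; case/and3P: sq => _ /eqP lq _.
  suff: x :: p = x :: q by case.
  by rewrite !lastI eb lp lq.
- exact: down yx xym sp sq.
- by move: sp sq; rewrite exy => /simple_path_nil-> /simple_path_nil->.
Qed.

Lemma parent_rel_tree : 0 < n -> is_tree parent_rel.
Proof.
move=> n0; split; [exact: parent_rel_sym|split; [exact: parent_rel_irr|move=> x y]].
have [|p [px lp up _]] := @rooted_path predT (Ordinal n0) isT _ x y isT isT.
  by move=> z _ z0; rewrite lt0n.
exists p; split=> [|q sq]; first by rewrite px lp eqxx.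
by apply: simple_path_unique sq; rewrite /simple_path px lp eqxx.
Qed.

End ParentTree.

Section DagDecomposition.
Variables (V : finType) (e : rel V).

Definition ancestors (v : V) : {set V} := [set u | connect e u v].

Lemma source_connect u v : v \in sources e -> connect e u v -> u = v.
Proof.
move=> vs /connectP [p]; case/lastP: p => [_ ->//|p y].
rewrite rcons_path last_rcons => /andP[_ ey] vy.
by move: vs; rewrite vy inE => /forallP /(_ (last u p)); rewrite ey.
Qed.

Lemma mem_reachB (B : {set V}) v : (v \in reachB e B) = (B :&: ancestors v != set0).
Proof.
by apply/bigcupP/set0Pn => [[s sB]|[s /setIP [sB]]]; rewrite !inE => sv;
  exists s; rewrite ?inE ?sB.
Qed.

(* Only non-sources can have two source ancestors. *)
Lemma potential_ancestors : potential ancestors (sources e) setT <= #|V|.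
Proof.
rewrite /potential -(cardsC (sources e)) leq_add2l subset_leq_card //.
apply/subsetP=> v; rewrite !inE /= => c; apply/negP=> vs.
have : #|ancestors v :&: sources e| <= 1.
  rewrite -(cards1 v) subset_leq_card //; apply/subsetP=> u.
  by rewrite !inE => /andP[uv _]; rewrite (source_connect _ uv) ?inE.
by rewrite leqNgt c.
Qed.

Lemma dag_tree_decomposition_of_dec n par bag :
  is_dec ancestors (sources e) setT n par bag ->
  dag_tree_decomposition e (parent_rel par) (fun i : 'I_n => bag i).
Proof.
case=> n0 par_lt hb hc hr; split.
- exact: parent_rel_tree.
- by move=> i; apply: hb.
- by move=> s /hc [i lin si]; exists (Ordinal lin).
move=> i i1 i2 on_path; apply/subsetP=> v; rewrite inE !mem_reachB => /andP[v1 v2].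
have meet (j : 'I_n) : bag j :&: ancestors v != set0 -> meeting n bag (ancestors v) j.
  by rewrite /meeting ltn_ord.
case: (hr v (in_setT v)) => [emp|[r [Xr H]]]; first by move: (emp i1); rewrite meet.
have rn : r < n by case/andP: Xr.
have [p [pp lp up /(_ i (on_path p pp lp up))]] :=
  rooted_path par_lt (r := Ordinal rn) Xr H (meet _ v1) (meet _ v2).
by case/andP.
Qed.

End DagDecomposition.

Local Open Scope ring_scope.

Theorem mainTheorem19 (V : finType) (e : rel V) :
  is_dag e ->
  exists (I : finType) (t : rel I) (bag : I -> {set V}),
    dag_tree_decomposition e t bag /\
    ((dtd_width bag)%:R : rat) <= (#|V|%:R / 5%:R + 4%:R).
Proof.
move=> _.
have [K [[n [par [bag [dec bagK]]]] boundK]] := dec_bound_all (ancestors e) (sources e) setT.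
exists 'I_n, (parent_rel par), (fun i : 'I_n => bag i); split.
  exact: dag_tree_decomposition_of_dec dec.
have widthK : (dtd_width (fun i : 'I_n => bag i) <= K)%N by apply/bigmax_leqP => i _; apply: bagK.
have w5 : (5 * dtd_width (fun i : 'I_n => bag i) <= #|V| + 20)%N.
  by move: widthK boundK (potential_ancestors e); rewrite /potential; clear; lia.
by move: w5; rewrite -(ler_nat rat) natrM natrD => w5; lra.
Qed.
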